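(* Let $G=(V,E)$ be a graph with $\mathrm{nd}(G)=\nu$, and let $\alpha_1,\dots,\alpha_\ell$ be local linear cardinality constraints. Then there exist a neighbourhood decomposition $\mathcal{T}$ of $G$ with $|\mathcal{T}|\le\nu 4^\ell$ and local linear cardinality constraints $\alpha'_1,\dots,\alpha'_\ell$ such that: - each $\alpha'_i$ is uniform with respect to $\mathcal{T}$ (every type of $\mathcal{T}$ is uniform with respect to every $\alpha'_i$); - for every tuple $(X_1,\dots,X_\ell)$ of subsets of $V$: $X_i$ satisfies $\alpha_i$ for all $i\in[\ell]$ if and only if $X_i$ satisfies $\alpha'_i$ for all $i\in[\ell]$.
   Context: Neighbourhood decompositions: - Two vertices $u,v$ have the same neighbourhood type if $N(u)\setminus\{v\}=N(v)\setminus\{u\}$. - A neighbourhood decomposition is a partition of $V$ into classes (''types'') of pairwise same-type vertices. - $\mathrm{nd}(G)$ is the minimum size of a neighbourhood decomposition. Local linear cardinality constraints: - A local linear cardinality constraint is a map $\alpha$ assigning to each $v\in V$ an integer interval $\alpha(v)=\{l_v,\dots,u_v\}\subseteq\{0,\dots,|V|\}$, possibly empty. - $X\subseteq V$ satisfies $\alpha$ if $|X\cap N(v)|\in\alpha(v)$ for all $v$. - A type $T$ is uniform with respect to $\alpha$ if $\alpha$ is constant on $T$. *)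

From mathcomp Require Import all_boot.
Set Implicit Arguments. Unset Strict Implicit. Unset Printing Implicit Defensive.

Definition nbhd (T : finType) (e : rel T) (v : T) : {set T} := [set u | e v u].

Definition same_type (T : finType) (e : rel T) (u v : T) : bool :=
  (nbhd e u :\ v) == (nbhd e v :\ u).

Definition is_nd (T : finType) (e : rel T) (P : {set {set T}}) : bool :=
  partition P [set: T] &&
  [forall B in P, forall u in B, forall v in B, same_type e u v].

(* nd(G): minimum size of a neighbourhood decomposition (the singleton
   partition always is one, of size <= #|T|). *)
Definition nd (T : finType) (e : rel T) : nat :=
  \big[minn/#|T|]_(P : {set {set T}} | is_nd e P) #|P|.

(* A local linear cardinality constraint assigns to each vertex a subset of
   {0,...,|V|} (encoded as 'I_(#|T|.+1)) which is an integer interval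
   (possibly empty). *)
Definition lcc_val (T : finType) := T -> {set 'I_(#|T|.+1)}.

Definition is_interval (n : nat) (A : {set 'I_n}) : Prop :=
  exists l u : nat, A = [set i : 'I_n | l <= i <= u].

Definition is_lcc (T : finType) (alpha : lcc_val T) : Prop :=
  forall v, is_interval (alpha v).

Definition satisfies (T : finType) (e : rel T) (alpha : lcc_val T) (X : {set T}) : bool :=
  [forall v, [exists i in alpha v, val i == #|X :&: nbhd e v|]].

Definition uniform (T : finType) (alpha : lcc_val T) (B : {set T}) : bool :=
  [forall u in B, forall v in B, alpha u == alpha v].

From mathcomp Require Import all_boot zify.
Set Implicit Arguments. Unset Strict Implicit. Unset Printing Implicit Defensive.

(* Two vertices of the same type see the same neighbours apart from each
   other, so |X ∩ N(v)| varies by at most one inside a type.  On a type B of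
   an optimal decomposition let L = max_B lb and U = min_B ub.  The count at a
   vertex realising L is at least L, hence every count on B is at least L - 1,
   and symmetrically at most U + 1.  So the constraint [lb v, ub v] at v in B
   may be replaced by [L - 1, U + 1], without the -1 when lb v = L and without
   the +1 when ub v = U.  The new constraint depends only on B and two bits per
   constraint, so splitting the types by these bits gives nu * 4^l uniform
   types. *)

Section PreimPartition.

Variables (T rT : finType) (f : T -> rT) (D : {set T}).

Lemma preim_partition_eq B u v :
  B \in preim_partition f D -> u \in B -> v \in B -> f u = f v.
Proof. by case/imsetP=> x _ -> /[!inE] /andP[_ /eqP<-] /andP[_ /eqP<-]. Qed.

Lemma card_preim_partition : #|preim_partition f D| <= #|f @: D|.
Proof.
have -> : preim_partition f D = (fun y => [set x in D | y == f x]) @: (f @: D).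
  by rewrite -imset_comp.
exact: leq_imset_card.
Qed.

End PreimPartition.

Section BlockBounds.

Variables (T : finType) (P : {set {set T}}).
Hypothesis partP : partition P [set: T].

Lemma pblock_self v : v \in pblock P v.
Proof. by case/and3P: partP => /eqP covP _ _; rewrite mem_pblock covP inE. Qed.

Lemma pblock_in_partition v : pblock P v \in P.
Proof. by rewrite pblock_mem // -mem_pblock pblock_self. Qed.

Definition block_max (b : T -> nat) v := b [arg max_(w > v in pblock P v) b w].
Definition block_min (b : T -> nat) v := b [arg min_(w < v in pblock P v) b w].

Lemma block_maxP b v :
  (exists2 w, w \in pblock P v & b w = block_max b v) /\
  {in pblock P v, forall u, b u <= block_max b v}.
Proof.
rewrite /block_max; case: arg_maxnP => [|w wP w_max]; first exact: pblock_self.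
by split; first exists w.
Qed.

Lemma block_minP b v :
  (exists2 w, w \in pblock P v & b w = block_min b v) /\
  {in pblock P v, forall u, block_min b v <= b u}.
Proof.
rewrite /block_min; case: arg_minnP => [|w wP w_min]; first exact: pblock_self.
by split; first exists w.
Qed.

Lemma block_max_pblock b u v :
  pblock P u = pblock P v -> block_max b u = block_max b v.
Proof.
move=> Euv; have [[wu wuP <-] ubu] := block_maxP b u.
have [[wv wvP <-] ubv] := block_maxP b v.
by apply/eqP; rewrite eqn_leq ubv -?Euv // ubu ?Euv.
Qed.

Lemma block_min_pblock b u v :
  pblock P u = pblock P v -> block_min b u = block_min b v.
Proof.
move=> Euv; have [[wu wuP <-] lbu] := block_minP b u.
have [[wv wvP <-] lbv] := block_minP b v.
by apply/eqP; rewrite eqn_leq lbu ?Euv // lbv -?Euv.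
Qed.

Lemma card_preim_partition_pblock (rT : finType) (h : T -> rT) :
  #|preim_partition (fun v => (pblock P v, h v)) [set: T]| <= #|P| * #|rT|.
Proof.
rewrite (leq_trans (card_preim_partition _ _)) // -cardsT -cardsX subset_leq_card //.
by apply/subsetP => _ /imsetP[v _ ->]; rewrite !inE pblock_in_partition.
Qed.

Definition tight_lb (lb : T -> nat) v :=
  block_max lb v - (lb v < block_max lb v).
Definition tight_ub (ub : T -> nat) v :=
  block_min ub v + (block_min ub v < ub v).

Lemma tight_bounds_equiv (lb ub c : T -> nat) :
  (forall v, {in pblock P v &, forall u w, c u <= c w + 1}) ->
  [forall v, lb v <= c v <= ub v] =
  [forall v, tight_lb lb v <= c v <= tight_ub ub v].
Proof.
move=> c_lip; apply/forallP/forallP => c_in v; move: (c_in v);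
  rewrite /tight_lb /tight_ub;
  have [[wl wlP <-] lb_le] := block_maxP lb v;
  have [[wu wuP <-] ub_ge] := block_minP ub v;
  have := lb_le v (pblock_self v); have := ub_ge v (pblock_self v).
- have := c_lip v _ _ wlP (pblock_self v).
  have := c_lip v _ _ (pblock_self v) wuP.
  by have := c_in wl; have := c_in wu; case: ltnP; case: ltnP => /=; lia.
- by case: ltnP; case: ltnP => /=; lia.
Qed.

End BlockBounds.

Section Neighbourhoods.

Variables (T : finType) (e : rel T).

Lemma card_nbhd_same_type (X : {set T}) v w :
  same_type e v w -> #|X :&: nbhd e v| <= #|X :&: nbhd e w| + 1.
Proof.
move=> /eqP Nvw; rewrite (cardsD1 w (X :&: nbhd e v)).
suff : #|(X :&: nbhd e v) :\ w| <= #|X :&: nbhd e w| by case: (w \in _) => /=; lia.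
apply/subset_leq_card/subsetP => x /[!inE] /andP[xw /andP[xX xv]].
have : x \in nbhd e w :\ v by rewrite -Nvw !inE xw xv.
by rewrite !inE => /andP[_ ->]; rewrite xX.
Qed.

Lemma is_nd_same_type P B u v :
  is_nd e P -> B \in P -> u \in B -> v \in B -> same_type e u v.
Proof.
by case/andP=> _ /forall_inP ndP /ndP /forall_inP uP /uP /forall_inP vP /vP.
Qed.

Lemma is_nd_card_nbhd_pblock P (X : {set T}) v : is_nd e P ->
  {in pblock P v &, forall u w, #|X :&: nbhd e u| <= #|X :&: nbhd e w| + 1}.
Proof.
move=> ndP u w uP wP; have partP : partition P [set: T] by case/andP: ndP.
exact/card_nbhd_same_type/(is_nd_same_type ndP (pblock_in_partition partP v)).
Qed.

Lemma is_nd_refine (rT : finType) (f : T -> rT) P :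
  is_nd e P -> (forall u v, f u = f v -> pblock P u = pblock P v) ->
  is_nd e (preim_partition f [set: T]).
Proof.
move=> ndP f_pblock; have partP : partition P [set: T] by case/andP: ndP.
rewrite /is_nd preim_partitionP; apply/forall_inP => B BQ.
apply/forall_inP => u uB; apply/forall_inP => v vB.
apply: (is_nd_same_type ndP (pblock_in_partition partP u) (pblock_self partP u)).
by rewrite (f_pblock _ _ (preim_partition_eq BQ uB vB)) pblock_self.
Qed.

Lemma nd_attained : exists2 P, is_nd e P & #|P| <= nd e.
Proof.
apply: (big_ind (fun n => exists2 P, is_nd e P & #|P| <= n)) => //.
- exists (preim_partition id [set: T]).
    rewrite /is_nd preim_partitionP; apply/forall_inP => B BQ.
    apply/forall_inP => u uB; apply/forall_inP => v vB.
    by rewrite (preim_partition_eq BQ uB vB) /same_type.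
  by rewrite (leq_trans (card_preim_partition _ _)) // -[leqRHS]cardsT leq_imset_card.
- move=> m n [P ndP Pm] [Q ndQ Qn]; case: (leqP m n) => [le_mn | /ltnW le_nm].
    by exists P; rewrite ?(minn_idPl le_mn).
  by exists Q; rewrite ?(minn_idPr le_nm).
- by move=> P ndP; exists P.
Qed.

Definition lcc_interval (lb ub : T -> nat) : lcc_val T :=
  fun v => [set k : 'I_#|T|.+1 | lb v <= k <= ub v].

Lemma is_lcc_interval lb ub : is_lcc (lcc_interval lb ub).
Proof. by move=> v; exists (lb v), (ub v). Qed.

Lemma eq_satisfies (alpha beta : lcc_val T) X :
  alpha =1 beta -> satisfies e alpha X = satisfies e beta X.
Proof. by move=> eq_ab; apply: eq_forallb => v; rewrite eq_ab. Qed.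

Lemma satisfies_interval lb ub X :
  satisfies e (lcc_interval lb ub) X =
  [forall v, lb v <= #|X :&: nbhd e v| <= ub v].
Proof.
apply/forallP/forallP => sat v.
  by have /existsP[k /andP[/[!inE] kv /eqP <-]] := sat v.
have cardT : #|X :&: nbhd e v| < #|T|.+1 by rewrite ltnS max_card.
by apply/existsP; exists (Ordinal cardT); rewrite inE /= sat eqxx.
Qed.

Lemma lcc_bounds (I : Type) (alpha : I -> lcc_val T) :
  (forall i, is_lcc (alpha i)) ->
  exists lb ub, forall i, alpha i =1 lcc_interval (lb i) (ub i).
Proof.
move=> lccA.
have bounds i v : {p : nat * nat | alpha i v == lcc_interval (fun=> p.1) (fun=> p.2) v}.
  by apply: sigW; have [a [b ->]] := lccA i v; exists (a, b).
exists (fun i v => (sval (bounds i v)).1), (fun i v => (sval (bounds i v)).2).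
by move=> i v; rewrite (eqP (svalP (bounds i v))).
Qed.

End Neighbourhoods.

Theorem mainTheorem11 (T : finType) (e : rel T)
    (e_sym : symmetric e) (e_irr : irreflexive e)
    (nu : nat) (Hnu : nd e = nu)
    (l : nat) (alpha : 'I_l -> lcc_val T)
    (Halpha : forall i, is_lcc (alpha i)) :
  exists (P : {set {set T}}) (alpha' : 'I_l -> lcc_val T),
    [/\ is_nd e P,
        #|P| <= nu * 4 ^ l,
        (forall i, is_lcc (alpha' i)),
        (forall i, forall B, B \in P -> uniform (alpha' i) B) &
        (forall X : 'I_l -> {set T},
           (forall i, satisfies e (alpha i) (X i)) <->
           (forall i, satisfies e (alpha' i) (X i)))].
Proof.
have [lb [ub alphaE]] := lcc_bounds Halpha.
have [P ndP cardP] := nd_attained e.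
have partP : partition P [set: T] by case/andP: ndP.
pose code v : {ffun 'I_l -> bool * bool} :=
  [ffun i => (lb i v < block_max P (lb i) v, block_min P (ub i) v < ub i v)].
pose f v := (pblock P v, code v).
pose alpha' i := lcc_interval (tight_lb P (lb i)) (tight_ub P (ub i)).
exists (preim_partition f [set: T]), alpha'; split.
- by apply: is_nd_refine ndP _ => u v [].
- apply: leq_trans (card_preim_partition_pblock partP code) _.
  by rewrite card_ffun card_prod card_bool card_ord -Hnu leq_mul2r cardP orbT.
- by move=> i; apply: is_lcc_interval.
- move=> i B BQ; apply/forall_inP => u uB; apply/forall_inP => v vB.
  case: (preim_partition_eq BQ uB vB) => Euv /ffunP/(_ i); rewrite !ffunE => -[lbE ubE].
  by rewrite /alpha' /lcc_interval /tight_lb /tight_ub lbE ubE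
    (block_max_pblock partP _ Euv) (block_min_pblock partP _ Euv).
- have alpha'E i Y : satisfies e (alpha i) Y = satisfies e (alpha' i) Y.
    rewrite (eq_satisfies _ _ (alphaE i)) !satisfies_interval.
    by apply: (tight_bounds_equiv partP) => v; apply: is_nd_card_nbhd_pblock.
  by move=> X; split=> sat i; rewrite ?alpha'E // -alpha'E.
Qed.
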